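(* Let $K$ be any maximal connected set of marked vertices in the subgraph of $\Gamma_X$ induced on its bulk vertices. Then $$\sum_{t=1}^{T-1}|R_{2t+1}|_K+\sum_{t=1}^{T}|C_{2t}|_K\;\le\;\sum_{t=1}^{T-1}|P_{2t+1}|_K+\sum_{t=1}^{T}|B_{2t}|_K.$$
   Context: $Q=(H^X,H^Z)$ is a CSS code: full-rank $H^X\in\mathbb F_2^{m_x\times n}$, $H^Z\in\mathbb F_2^{m_z\times n}$ with $H^X(H^Z)^T=0$; write $i\sim c$ if qubit $i$ is in the support of check $c$. $Q$ is $\ell$-LDPC (rows of weight $\le\ell$, each qubit in $\le\ell$ checks). ATG: fix $T\ge1$; graph with code vertices $q_{i,t}$ ($i\in[n]$, $t\in[2T+1]$), Z-check vertices $z_{c,t}$ ($c\in[m_z]$, $t$ odd), X-check vertices $x_{c,t}$ ($c\in[m_x]$, $t$ even); edges $q_{i,t}q_{i,t+1}$, $q_{i,t}z_{c,t}$ ($t$ odd, $H^Z_{c,i}=1$), $q_{i,t}x_{c,t}$ ($t$ even, $H^X_{c,i}=1$). Boundary $\partial=\{q_{i,1},q_{i,2T+1}\}$, bulk $\mathcal B=$ all other vertices. Decoding setup. A Z-type bulk error is $\eta\in\{0,1\}^{\mathcal B}$ with components $P_t\in\{0,1\}^n$ (code vertices of layer $t$, $2\le t\le 2T$) and $B_t$ (check vertices of layer $t$; $B_t\in\{0,1\}^{m_z}$ for odd $t$, $\in\{0,1\}^{m_x}$ for even $t$). The meta-check vectors are the indicator vectors $\alpha\in\{0,1\}^{\mathcal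 B}$ of the sets $\{z_{c,t-1},z_{c,t+1}\}\cup\{q_{i,t}:i\sim c\}$ ($t$ even, $c\in[m_z]$) and $\{x_{c,t-1},x_{c,t+1}\}\cup\{q_{i,t}:i\sim c\}$ ($t$ odd, $3\le t\le 2T-1$, $c\in[m_x]$). The decoder outputs a minimum-Hamming-weight $\beta\in\{0,1\}^{\mathcal B}$ with $\alpha\cdot\beta=\alpha\cdot\eta\pmod 2$ for all meta-check vectors $\alpha$; $R_t,C_t$ denote the components of $\beta$ analogous to $P_t,B_t$. Residual: $G_1\in\{0,1\}^n$ is a minimum-weight vector with $H^XG_1=B_2\oplus C_2$ and $G_{2T+1}$ a minimum-weight vector with $H^XG_{2T+1}=B_{2T}\oplus C_{2T}$. X syndrome adjacency graph $\Gamma_X$: vertex set $\{q_{i,t}: i\in[n], t\text{ odd in }[2T+1]\}\cup\{x_{c,t}:c\in[m_x], t\text{ even in }[2T]\}$; two distinct vertices are adjacent iff both lie in one of the sets $\{x_{c,t-1},x_{c,t+1}\}\cup\{q_{i,t}:i\sim c\}$ (odd $3\le t\le2T-1$), $\{x_{c,2}\}\cup\{q_{i,1}:i\sim c\}$, or $\{x_{c,2T}\}\cup\{q_{i,2T+1}:i\sim c\}$ ($c\in[m_x]$). Its boundary vertices are $q_{i,1},q_{i,2T+1}$; all others are its bulk vertices. Marking: bulk $q_{i,t}$ is marked iff $(P_t)_i\ne(R_t)_i$; $x_{c,t}$ is marked iff $(B_t)_c\ne(C_t)_c$; $q_{i,1}$ (resp. $q_{i,2T+1}$) is marked iff $(G_1)_i=1$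 (resp. $(G_{2T+1})_i=1$). For a vector $U$ indexed by the vertices of one layer and a vertex set $K$, $|U|_K$ denotes the number of positions $j$ with $U_j=1$ whose corresponding vertex lies in $K$. *)

From mathcomp Require Import all_boot all_algebra.

Set Implicit Arguments.
Unset Strict Implicit.
Unset Printing Implicit Defensive.

(* Vertices of the ATG.  A vertex is (kind, layer) where the kind is   *)
(*   inl (inl i) : code vertex  q_{i,t}   (i : 'I_n)                   *)
(*   inl (inr c) : Z-check vertex z_{c,t} (c : 'I_mz)                  *)
(*   inr c       : X-check vertex x_{c,t} (c : 'I_mx)                  *)
(* and the layer t is a natural number < 2T+2 (layers used: 1..2T+1,   *)
(* the paper's [2T+1]).  Only the "valid" pairs are actual vertices.   *)
Definition vtx (n mz mx T : nat) : finType :=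
  (('I_n + 'I_mz + 'I_mx) * 'I_(T.*2.+2))%type.

Definition lay n mz mx T (v : vtx n mz mx T) : nat := v.2.

Definition is_q n mz mx T (v : vtx n mz mx T) : bool :=
  if v.1 is inl (inl _) then true else false.
Definition is_x n mz mx T (v : vtx n mz mx T) : bool :=
  if v.1 is inr _ then true else false.

Definition valid_vtx n mz mx T (v : vtx n mz mx T) : bool :=
  match v.1 with
  | inl (inl _) => 1 <= v.2
  | inl (inr _) => odd v.2
  | inr _ => ~~ odd v.2 && (2 <= v.2 <= T.*2)
  end.

(* bulk = all vertices except q_{i,1}, q_{i,2T+1} *)
Definition bulk_vtx n mz mx T (v : vtx n mz mx T) : bool :=
  match v.1 with
  | inl (inl _) => 2 <= v.2 <= T.*2
  | _ => valid_vtx v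
  end.

Definition Bulk (n mz mx T : nat) : finType :=
  {v : vtx n mz mx T | bulk_vtx v}.

Definition zmeta n mz mx T (HZ : 'M['F_2]_(mz, n)) (c : 'I_mz) (t : nat)
  (v : vtx n mz mx T) : bool :=
  match v.1 with
  | inl (inl i) => (nat_of_ord v.2 == t) && (HZ c i != 0%R)
  | inl (inr c') => (c' == c) && ((nat_of_ord v.2 == t.-1) || (nat_of_ord v.2 == t.+1))
  | inr _ => false
  end.

Definition xmeta n mz mx T (HX : 'M['F_2]_(mx, n)) (c : 'I_mx) (t : nat)
  (v : vtx n mz mx T) : bool :=
  match v.1 with
  | inl (inl i) => (nat_of_ord v.2 == t) && (HX c i != 0%R)
  | inl (inr _) => false
  | inr c' => (c' == c) && ((nat_of_ord v.2 == t.-1) || (nat_of_ord v.2 == t.+1))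
  end.

(* alpha . f mod 2, for the indicator vector alpha of the set S restricted to the bulk *)
Definition dot2 n mz mx T (S : vtx n mz mx T -> bool) (f : Bulk n mz mx T -> bool) : bool :=
  odd #|[set v : Bulk n mz mx T | S (val v) && f v]|.

Definition meta_ok n mz mx T (HX : 'M['F_2]_(mx, n)) (HZ : 'M['F_2]_(mz, n))
  (eta f : Bulk n mz mx T -> bool) : Prop :=
  (forall (c : 'I_mz) (t : nat), ~~ odd t -> 2 <= t <= T.*2 ->
     dot2 (zmeta HZ c t) f = dot2 (zmeta HZ c t) eta) /\
  (forall (c : 'I_mx) (t : nat), odd t -> 3 <= t <= T.*2.-1 ->
     dot2 (xmeta HX c t) f = dot2 (xmeta HX c t) eta).

Definition weight n mz mx T (f : Bulk n mz mx T -> bool) : nat :=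
  #|[set v : Bulk n mz mx T | f v]|.

Definition decoder_output n mz mx T (HX : 'M['F_2]_(mx, n)) (HZ : 'M['F_2]_(mz, n))
  (eta beta : Bulk n mz mx T -> bool) : Prop :=
  meta_ok HX HZ eta beta /\
  (forall g : Bulk n mz mx T -> bool, meta_ok HX HZ eta g -> weight beta <= weight g).

Definition gx_vertex n mz mx T (v : vtx n mz mx T) : bool :=
  match v.1 with
  | inl (inl _) => odd v.2
  | inl (inr _) => false
  | inr _ => ~~ odd v.2 && (2 <= v.2 <= T.*2)
  end.

(* Two distinct vertices of Gamma_X are adjacent iff they both lie in a set
   {x_{c,t-1},x_{c,t+1}} u {q_{i,t} : i ~ c} for some odd t in [2T+1]; for
   t = 1 (resp. t = 2T+1) the non-existent x_{c,0} (resp. x_{c,2T+2}) is not a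
   vertex of Gamma_X, so this is exactly the boundary set
   {x_{c,2}} u {q_{i,1}} (resp. {x_{c,2T}} u {q_{i,2T+1}}). *)
Definition gx_adj n mz mx T (HX : 'M['F_2]_(mx, n)) (u v : vtx n mz mx T) : bool :=
  [&& gx_vertex u, gx_vertex v, u != v &
   [exists c : 'I_mx, exists t : 'I_(T.*2.+2),
      [&& odd t, xmeta HX c t u & xmeta HX c t v]]].

Definition marked n mz mx T (eta beta : Bulk n mz mx T -> bool) (v : Bulk n mz mx T) : bool :=
  gx_vertex (val v) && (eta v != beta v).

Definition gx_connected n mz mx T (HX : 'M['F_2]_(mx, n)) (K : {set Bulk n mz mx T}) : Prop :=
  forall u v, u \in K -> v \in K ->
    connect [rel x y : Bulk n mz mx T | [&& x \in K, y \in K & gx_adj HX (val x) (val y)]] u v.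

Definition marked_set n mz mx T (eta beta : Bulk n mz mx T -> bool) (K : {set Bulk n mz mx T}) : Prop :=
  forall v, v \in K -> marked eta beta v.

Definition max_marked_connected n mz mx T (HX : 'M['F_2]_(mx, n))
  (eta beta : Bulk n mz mx T -> bool) (K : {set Bulk n mz mx T}) : Prop :=
  [/\ marked_set eta beta K, gx_connected HX K &
      forall K' : {set Bulk n mz mx T}, K \subset K' -> marked_set eta beta K' ->
        gx_connected HX K' -> K' = K].

(* |U_t|_K for the code vertices (U = P or R) and X-check vertices (U = B or C) of layer t *)
Definition cntQ n mz mx T (K : {set Bulk n mz mx T}) (f : Bulk n mz mx T -> bool) (t : nat) : nat :=
  #|[set v in K | [&& is_q (val v), lay (val v) == t & f v]]|.
Definition cntX n mz mx T (K : {set Bulk n mz mx T}) (f : Bulk n mz mx T -> bool) (t : nat) : nat :=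
  #|[set v in K | [&& is_x (val v), lay (val v) == t & f v]]|.

Definition css_ldpc n mz mx (l : nat) (HX : 'M['F_2]_(mx, n)) (HZ : 'M['F_2]_(mz, n)) : Prop :=
  [/\ \rank HX = mx, \rank HZ = mz & (HX *m HZ^T = 0)%R] /\
  [/\ (forall c, #|[set i | HX c i != 0%R]| <= l),
      (forall c, #|[set i | HZ c i != 0%R]| <= l) &
      (forall i, #|[set c | HX c i != 0%R]| + #|[set c | HZ c i != 0%R]| <= l)].

From mathcomp Require Import all_boot all_algebra.
From mathcomp Require Import zify.

Set Implicit Arguments.
Unset Strict Implicit.
Unset Printing Implicit Defensive.

(* Let beta' agree with eta on K and with beta elsewhere.  It has the same
   meta-syndrome as beta: Z-type meta-checks contain no vertex of Gamma_X, hence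
   none of K; an X-type meta-check either misses K, or meets K, and then every
   marked vertex of its support is adjacent to a vertex of K, so lies in K by
   maximality, and beta' = eta on the whole support.  Minimality of the decoder
   output gives |beta| <= |beta'|, and the two weights differ only on K. *)

Lemma card_set_sum (T : finType) (P : pred T) :
  #|[set v | P v]| = \sum_v (P v : nat).
Proof.
rewrite -sum1dep_card big_mkcond; apply: eq_bigr => v _; by case: (P v).
Qed.

Lemma card_setI_sum (T : finType) (A : {set T}) (P : pred T) :
  #|[set v in A | P v]| = \sum_(v in A) (P v : nat).
Proof.
rewrite card_set_sum [RHS]big_mkcond; apply: eq_bigr => v _; by case: (v \in A).
Qed.

Lemma sum_nat_pick (a b s : nat) (g : nat -> nat) (x : bool) :
  injective g -> a <= s < b ->
  \sum_(a <= t < b) ((g s == g t) && x : nat) = x.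
Proof.
move=> g_inj hs.
rewrite (bigD1_seq s) ?mem_index_iota ?iota_uniq //= eqxx big1_seq ?addn0 //.
by move=> t /andP [ts _]; rewrite (inj_eq g_inj) eq_sym (negbTE ts).
Qed.

Definition splice (T : Type) (K : pred T) (f g : T -> bool) (v : T) : bool :=
  if K v then f v else g v.

Lemma sum_le_splice (T : finType) (K : {set T}) (f g : T -> bool) :
  #|[set v | g v]| <= #|[set v | splice (mem K) f g v]| ->
  \sum_(v in K) (g v : nat) <= \sum_(v in K) (f v : nat).
Proof.
rewrite !card_set_sum (bigID (mem K)) [X in _ <= X](bigID (mem K)) /=.
have -> : \sum_(v | v \notin K) (splice (mem K) f g v : nat)
          = \sum_(v | v \notin K) (g v : nat).
  by apply: eq_bigr => v /negbTE vK; rewrite /splice /= vK.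
have -> : \sum_(v in K) (splice (mem K) f g v : nat) = \sum_(v in K) (f v : nat).
  by apply: eq_bigr => v vK; rewrite /splice /= vK.
by rewrite leq_add2r.
Qed.

Lemma dot2_eq_on n mz mx T (S : vtx n mz mx T -> bool) (f g : Bulk n mz mx T -> bool) :
  (forall v, S (val v) -> f v = g v) -> dot2 S f = dot2 S g.
Proof.
move=> fg; rewrite /dot2; congr odd; apply: eq_card => v; rewrite !inE.
by case Sv: (S _) => //=; rewrite fg.
Qed.

Section GammaX.

Variables (n mz mx T : nat) (HX : 'M['F_2]_(mx, n)).

Local Notation bulk := (Bulk n mz mx T).

Lemma gx_adj_sym : symmetric (@gx_adj n mz mx T HX).
Proof.
have adjC (u v : vtx n mz mx T) : gx_adj HX u v -> gx_adj HX v u.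
  case/and4P=> gu gv uv /existsP [c /existsP [t /and3P [ot hu hv]]].
  rewrite /gx_adj gu gv eq_sym uv /=.
  by apply/existsP; exists c; apply/existsP; exists t; rewrite ot hu hv.
by move=> u v; apply/idP/idP; apply: adjC.
Qed.

Lemma gx_connected_setU1 (K : {set bulk}) (v w : bulk) :
  gx_connected HX K -> w \in K -> gx_adj HX (val v) (val w) ->
  gx_connected HX (v |: K).
Proof.
move=> conK wK avw.
set e := [rel x y : bulk | [&& x \in v |: K, y \in v |: K & gx_adj HX (val x) (val y)]].
have connK a b : a \in K -> b \in K -> connect e a b.
  move=> aK bK; apply: connect_sub (conK a b aK bK) => x y /and3P [xK yK axy].
  by apply: connect1; rewrite /= !in_setU1 xK yK axy !orbT.
have connw a : a \in v |: K -> connect e a w /\ connect e w a.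
  case/setU1P=> [-> | aK]; last by split; apply: connK.
  have awv : gx_adj HX (val w) (val v) by rewrite gx_adj_sym.
  by split; apply: connect1; rewrite /= !in_setU1 eqxx wK ?avw ?awv orbT.
by move=> a b /connw [aw _] /connw [_ wb]; apply: connect_trans aw wb.
Qed.

Lemma max_marked_connected_adj (eta beta : bulk -> bool) (K : {set bulk}) (v w : bulk) :
  max_marked_connected HX eta beta K -> w \in K -> marked eta beta v ->
  gx_adj HX (val v) (val w) -> v \in K.
Proof.
case=> markK conK maxK wK mv avw.
have markvK : marked_set eta beta (v |: K) by move=> u /setU1P [-> | /markK].
by rewrite -(maxK _ (subsetUr [set v] K) markvK (gx_connected_setU1 conK wK avw)) setU11.
Qed.

Lemma xmeta_gx_vertex c t (u : vtx n mz mx T) :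
  odd t -> 3 <= t <= T.*2.-1 -> xmeta HX c t u -> gx_vertex u.
Proof.
move=> ot ht; have [s def_t] : exists s, t = s.*2.+1.
  by exists t./2; rewrite -[t in LHS]odd_double_half ot add1n.
subst t.
case: u => [[[i|c']|c'] k]; rewrite /xmeta /gx_vertex //=.
- by case/andP=> /eqP ->; rewrite /= odd_double.
- by case/andP=> _ /orP [] /eqP ->; rewrite /= ?odd_double /=; lia.
Qed.

Lemma xmeta_gx_adj c t (u u' : vtx n mz mx T) :
  odd t -> 3 <= t <= T.*2.-1 -> xmeta HX c t u -> xmeta HX c t u' -> u != u' ->
  gx_adj HX u u'.
Proof.
move=> ot ht hu hu' uu'.
rewrite /gx_adj (xmeta_gx_vertex ot ht hu) (xmeta_gx_vertex ot ht hu') uu' /=.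
have tT : t < T.*2.+2 by lia.
by apply/existsP; exists c; apply/existsP; exists (Ordinal tT); rewrite /= ot hu hu'.
Qed.

Lemma zmeta_not_gx_vertex (HZ : 'M['F_2]_(mz, n)) c t (u : vtx n mz mx T) :
  ~~ odd t -> zmeta HZ c t u -> ~~ gx_vertex u.
Proof.
by move=> et; case: u => [[[i|c']|c'] k]; rewrite /zmeta /gx_vertex //= => /andP [/eqP ->].
Qed.

End GammaX.

Lemma marked_set_gx_vertex n mz mx T (eta beta : Bulk n mz mx T -> bool) K :
  marked_set eta beta K -> {in K, forall v, gx_vertex (val v)}.
Proof. by move=> markK v /markK /andP []. Qed.

Lemma gx_bulk_layer_sum n mz mx T (v : Bulk n mz mx T) (b : bool) :
  gx_vertex (val v) ->
  \sum_(1 <= t < T) ([&& is_q (val v), lay (val v) == t.*2.+1 & b] : nat)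
  + \sum_(1 <= t < T.+1) ([&& is_x (val v), lay (val v) == t.*2 & b] : nat) = b.
Proof.
case: v => [[[[i|c]|c] k] bv];
  rewrite /gx_vertex /bulk_vtx /valid_vtx /is_q /is_x /lay /= in bv *.
- move=> ok; rewrite [X in _ + X]big1 ?addn0 //.
  have [s def_k] : exists s, nat_of_ord k = s.*2.+1.
    by exists k./2; rewrite -[nat_of_ord k in LHS]odd_double_half ok add1n.
  rewrite def_k (@sum_nat_pick _ _ s (fun t => t.*2.+1)) //;
    last by rewrite def_k in bv; lia.
  by move=> x y [] /double_inj.
- by [].
- case/andP=> ek bk; rewrite big1 ?add0n //.
  have [s def_k] : exists s, nat_of_ord k = s.*2.
    by exists k./2; rewrite -[nat_of_ord k in LHS]odd_double_half (negbTE ek) add0n.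
  rewrite def_k (@sum_nat_pick _ _ s double) //; last by rewrite def_k in bk; lia.
  exact: double_inj.
Qed.

Lemma cnt_layers_sum n mz mx T (K : {set Bulk n mz mx T}) (f : Bulk n mz mx T -> bool) :
  {in K, forall v, gx_vertex (val v)} ->
  \sum_(1 <= t < T) cntQ K f t.*2.+1 + \sum_(1 <= t < T.+1) cntX K f t.*2
  = \sum_(v in K) (f v : nat).
Proof.
move=> gxK; rewrite /cntQ /cntX.
under eq_bigr do rewrite card_setI_sum.
under [X in _ + X]eq_bigr do rewrite card_setI_sum.
rewrite (exchange_big _ (index_iota 1 T)) (exchange_big _ (index_iota 1 T.+1)).
rewrite -big_split /=.
by apply: eq_bigr => v vK; apply: gx_bulk_layer_sum; apply: gxK.
Qed.

Lemma meta_ok_splice n mz mx T (HX : 'M['F_2]_(mx, n)) (HZ : 'M['F_2]_(mz, n))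
    (eta beta : Bulk n mz mx T -> bool) (K : {set Bulk n mz mx T}) :
  meta_ok HX HZ eta beta -> max_marked_connected HX eta beta K ->
  meta_ok HX HZ eta (splice (mem K) eta beta).
Proof.
move=> [okZ okX] maxK; have [/marked_set_gx_vertex gxK _ _] := maxK.
split=> c t ht ht'.
- rewrite -okZ //; apply: dot2_eq_on => v Sv; rewrite /splice /=.
  by case: ifP => // /gxK; rewrite (negbTE (zmeta_not_gx_vertex ht Sv)).
- set S := xmeta HX c t.
  have [/existsP [w /andP [Sw wK]] | /existsPn missK] :=
    boolP [exists w, S (val w) && (w \in K)]; last first.
    rewrite -okX //; apply: dot2_eq_on => v Sv; rewrite /splice /=.
    by move: (missK v); rewrite Sv /= => /negbTE ->.
  apply: dot2_eq_on => v Sv; rewrite /splice /=; case: ifP => // vK.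
  apply/eqP; apply: contraFT vK => etav.
  have [-> // | vw] := eqVneq v w.
  apply: (max_marked_connected_adj maxK wK).
    by rewrite /marked (xmeta_gx_vertex ht ht' Sv) eq_sym etav.
  by apply: xmeta_gx_adj ht ht' Sv Sw _; rewrite (inj_eq val_inj).
Qed.

Theorem lemma5p1 (n mx mz T l : nat) (HX : 'M['F_2]_(mx, n)) (HZ : 'M['F_2]_(mz, n))
  (eta beta : Bulk n mz mx T -> bool) (K : {set Bulk n mz mx T}) :
  1 <= T ->
  css_ldpc l HX HZ ->
  decoder_output HX HZ eta beta ->
  max_marked_connected HX eta beta K ->
  \sum_(1 <= t < T) cntQ K beta t.*2.+1 + \sum_(1 <= t < T.+1) cntX K beta t.*2
  <= \sum_(1 <= t < T) cntQ K eta t.*2.+1 + \sum_(1 <= t < T.+1) cntX K eta t.*2.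
Proof.
move=> _ _ [ok minimal] maxK; have [/marked_set_gx_vertex gxK _ _] := maxK.
rewrite !cnt_layers_sum //; apply: sum_le_splice.
exact: minimal (meta_ok_splice ok maxK).
Qed.
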